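(* Let $\varphi_o$ be a $G_2$-structure on an oriented $7$-manifold with metric $g_o$, volume form $\mathrm{vol}_o$ and Hodge star $*_o$, let $w$ be a vector field, and let $\tilde\varphi = \varphi_o + w\lrcorner *_o\varphi_o$. Then the volume form of $\tilde\varphi$ is \[ \widetilde{\mathrm{vol}} = (1+|w|_o^2)^{2/3}\,\mathrm{vol}_o . \]
   Context: A $G_2$-structure on an oriented $7$-manifold $M$ is a $3$-form $\varphi$ such that at each point $p$ there are local coordinates $x^1,\dots,x^7$ with $\varphi_p = dx^{123} - dx^{167} - dx^{527} - dx^{563} + dx^{415} + dx^{426} + dx^{437}$. It determines a Riemannian metric $g$ (equal to $\sum_k dx^k\otimes dx^k$ at $p$), a volume form $\mathrm{vol}$ and Hodge star, with $g(u,v)\,\mathrm{vol} = \frac16 (u\lrcorner\varphi)\wedge(v\lrcorner\varphi)\wedge\varphi$. *)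

From HB Require Import structures.
From mathcomp Require Import all_boot all_order all_algebra.
From mathcomp Require Import all_classical all_reals all_analysis.
Set Implicit Arguments. Unset Strict Implicit. Unset Printing Implicit Defensive.
Import Order.TTheory GRing.Theory Num.Theory.
Local Open Scope ring_scope.

Section G2.
Variable R : realType.

(* Tangent space at a point, identified with R^7 (row vectors). *)
Definition vec := 'rV[R]_7.

Definition form3 := vec -> vec -> vec -> R.
Definition form4 := vec -> vec -> vec -> vec -> R.
Definition form7 := ('I_7 -> vec) -> R.

(* A basis of vec is given by an invertible matrix F whose rows are the basis
   vectors e_i; coordinates of v in that basis are c with c *m F = v. *)
Definition coords (F : 'M[R]_7) (v : vec) : vec := v *m invmx F.

(* i-th coordinate, 1-based as in the paper *)
Definition x (c : vec) (a : nat) : R := c ord0 (inord a.-1).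

Definition dx3 (a b c : nat) (u v w : vec) : R :=
  x u a * (x v b * x w c - x v c * x w b)
  - x u b * (x v a * x w c - x v c * x w a)
  + x u c * (x v a * x w b - x v b * x w a).

Definition phi0 (u v w : vec) : R :=
  dx3 1 2 3 u v w - dx3 1 6 7 u v w - dx3 5 2 7 u v w - dx3 5 6 3 u v w
  + dx3 4 1 5 u v w + dx3 4 2 6 u v w + dx3 4 3 7 u v w.

(* F is a basis in which phi is the standard form, i.e. phi is a G2-structure
   with adapted coordinates given by the dual basis of F. *)
Definition adapted (phi : form3) (F : 'M[R]_7) : Prop :=
  F \in unitmx /\
  forall u v w, phi u v w = phi0 (coords F u) (coords F v) (coords F w).

Definition is_G2 (phi : form3) : Prop := exists F, adapted phi F.

Definition metric (F : 'M[R]_7) (u v : vec) : R :=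
  \sum_(j < 7) coords F u ord0 j * coords F v ord0 j.

Definition volf (F : 'M[R]_7) : form7 :=
  fun vs => \det (\matrix_(i < 7, j < 7) coords F (vs i) ord0 j).

Definition tup7 (v1 v2 v3 v4 v5 v6 v7 : vec) : 'I_7 -> vec :=
  fun i => nth 0 [:: v1; v2; v3; v4; v5; v6; v7] i.

(* Hodge star of a 3-form in the oriented orthonormal frame (row j F):
   ( *a)(v1..v4) = 1/3! sum_{j1 j2 j3} a(e_j1,e_j2,e_j3) vol(v1,..,v4,e_j1,e_j2,e_j3),
   i.e. the 4-form with  b /\ *a = g(b,a) vol. *)
Definition hodge3 (F : 'M[R]_7) (a : form3) : form4 :=
  fun v1 v2 v3 v4 =>
    (6%:R)^-1 * \sum_(j1 < 7) \sum_(j2 < 7) \sum_(j3 < 7)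
      a (row j1 F) (row j2 F) (row j3 F) *
      volf F (tup7 v1 v2 v3 v4 (row j1 F) (row j2 F) (row j3 F)).

Definition contr4 (w : vec) (b : form4) : form3 := fun u v z => b w u v z.

Definition add3 (a b : form3) : form3 := fun u v z => a u v z + b u v z.

End G2.

From HB Require Import structures.
From mathcomp Require Import all_boot all_order all_algebra perm.
From mathcomp Require Import all_classical all_reals all_analysis.
From mathcomp Require Import complex.
From mathcomp.algebra_tactics Require Import ring lra.
Import Order.TTheory GRing.Theory Num.Theory.
Local Open Scope ring_scope.
Set Implicit Arguments. Unset Strict Implicit. Unset Printing Implicit Defensive.

(* In coordinates adapted to phi_o, phi~ = phi0 + W _| psi0 with psi0 = *phi0 and W
   the coordinates of w.  Write W = n y with |y| = 1 and let a + ib be a cube root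
   of 1 + in.  The linear map
     P u = (a^2 + b^2)^-1 <u, y> y + a (u - <u, y> y) + b y x u
   pulls phi0 back to phi~, so phi~ is a G2-structure with volume form det P vol_o.
   Determinants are computed with the 7-form (u _| phi) /\ (v _| phi) /\ phi, which
   equals 6 <u, v> vol: applied to phi0 it puts the stabiliser of phi0 inside SL(7),
   so the volume does not depend on the adapted frame, and applied to phi~ at
   u = v = y it gives det P = (a^2 + b^2)^2 = (1 + n^2)^(2/3). *)

Local Notation o7 n := (@Ordinal 7 n isT).

(** * The Levi-Civita symbol *)

(* The sign of [l] as a permutation of [0, ..., n-1], and 0 if [l] repeats an entry;
   the recursion is the Laplace expansion along the first row. *)
Fixpoint levi_civita (n : nat) (l : seq nat) : int :=
  match n, l with
  | n'.+1, a :: l' =>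
      if a \in l' then 0 else (-1) ^+ a * levi_civita n' [seq unbump a j | j <- l']
  | _, _ => 1
  end.

Section FunMatrix.
Variable R : comPzRingType.

Definition fun_mx n (k : 'I_n -> 'I_n) : 'M[R]_n := \matrix_(i, j) (k i == j)%:R.

Lemma det_fun_mx n (k : 'I_n -> 'I_n) :
  \det (fun_mx k) = (levi_civita n [seq val (k i) | i <- enum 'I_n])%:~R.
Proof.
elim: n k => [|n IHn] k; first by rewrite det_mx00 enum_ord0.
rewrite (expand_det_row _ ord0) (bigD1 (k ord0)) //= big1 ?addr0; last first.
  by move=> j /negbTE kj; rewrite mxE eq_sym kj mul0r.
rewrite mxE eqxx mul1r /cofactor add0n enum_ordSl map_cons -map_comp.
set l := map _ (enum 'I_n); rewrite [levi_civita _ _]/=.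
case: ifP => k0l.
  have [i _ ki] : exists2 i, i \in enum 'I_n & val (k ord0) = val (k (lift ord0 i)).
    exact/mapP.
  rewrite (expand_det_row _ i) big1 ?mulr0 // => j _.
  rewrite !mxE (_ : k (lift ord0 i) = k ord0); last exact: val_inj.
  by rewrite (negbTE (neq_lift _ _)) mul0r.
pose k' i := odflt i (unlift (k ord0) (k (lift ord0 i))).
have kE i : k (lift ord0 i) = lift (k ord0) (k' i).
  rewrite /k'; case: unliftP => [//|kk].
  have : val (k (lift ord0 i)) \in l by apply/mapP; exists i; rewrite ?mem_enum.
  by rewrite kk k0l.
have -> : row' ord0 (col' (k ord0) (fun_mx k)) = fun_mx k'.
  by apply/matrixP => i j; rewrite !mxE kE (inj_eq (@lift_inj _ _)).
rewrite IHn rmorphM rmorphXn rmorphN1; congr (_ * _%:~R); congr levi_civita.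
by rewrite /l -map_comp; apply: eq_map => i /=; rewrite kE /= bumpK.
Qed.

Lemma det_colsub n (V : 'M[R]_n) (k : 'I_n -> 'I_n) :
  \det (colsub k V) = \det V * \det (fun_mx k).
Proof.
rewrite -[\det (fun_mx k)]det_tr -det_mulmx; congr (\det _).
apply/matrixP => i j; rewrite !mxE (bigD1 (k j)) //= big1 ?addr0.
  by rewrite !mxE eqxx mulr1.
by move=> l /negbTE lk; rewrite !mxE eq_sym lk mulr0.
Qed.

End FunMatrix.

Definition idx7 (a b c d e f g : 'I_7) : 'I_7 -> 'I_7 := tnth [tuple a; b; c; d; e; f; g].
Arguments idx7 a b c d e f g /.

Section Sum7.
Variable R : comPzRingType.

Definition sum7 (G : ('I_7 -> 'I_7) -> R) : R :=
  \sum_a \sum_b \sum_c \sum_d \sum_e \sum_f \sum_g G (idx7 a b c d e f g).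

Lemma prod7 (F : 'I_7 -> R) :
  \prod_i F i = F (o7 0) * F (o7 1) * F (o7 2) * F (o7 3) * F (o7 4) * F (o7 5) * F (o7 6).
Proof.
rewrite !big_ord_recl big_ord0 mulr1 !mulrA.
by congr (_ * _ * _ * _ * _ * _ * _); congr F; apply: val_inj.
Qed.

Lemma sum7E (F : 'I_7 -> R) :
  \sum_i F i = F (o7 0) + F (o7 1) + F (o7 2) + F (o7 3) + F (o7 4) + F (o7 5) + F (o7 6).
Proof.
rewrite !big_ord_recl big_ord0 addr0 !addrA.
by congr (_ + _ + _ + _ + _ + _ + _); congr F; apply: val_inj.
Qed.

Lemma eq_sum7 (G1 G2 : ('I_7 -> 'I_7) -> R) :
  (forall a b c d e f g, G1 (idx7 a b c d e f g) = G2 (idx7 a b c d e f g)) ->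
  sum7 G1 = sum7 G2.
Proof. by move=> G12; do 7!(apply: eq_bigr => ? _). Qed.

Lemma sum7_sum (I : finType) (G : I -> ('I_7 -> 'I_7) -> R) :
  \sum_i sum7 (G i) = sum7 (fun k => \sum_i G i k).
Proof. by rewrite /sum7; do 7!(rewrite exchange_big; apply: eq_bigr => ? _). Qed.

Lemma mulr_sum7 (c : R) (G : ('I_7 -> 'I_7) -> R) :
  c * sum7 G = sum7 (fun k => c * G k).
Proof. by rewrite /sum7; do 7!(rewrite mulr_sumr; apply: eq_bigr => ? _). Qed.

Lemma sum7_mul223 (A B : 'I_7 -> 'I_7 -> R) (C : 'I_7 -> 'I_7 -> 'I_7 -> R) :
  (\sum_a \sum_b A a b) * (\sum_c \sum_d B c d) * (\sum_e \sum_f \sum_g C e f g) =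
  sum7 (fun k => A (k (o7 0)) (k (o7 1)) * B (k (o7 2)) (k (o7 3))
                 * C (k (o7 4)) (k (o7 5)) (k (o7 6))).
Proof.
rewrite /sum7 /= /tnth /= -mulrA.
rewrite mulr_suml; apply: eq_bigr => a _; rewrite mulr_suml; apply: eq_bigr => b _.
rewrite mulr_suml mulr_sumr; apply: eq_bigr => c _.
rewrite mulr_suml mulr_sumr; apply: eq_bigr => d _.
do 3!(rewrite !mulr_sumr; apply: eq_bigr => ? _).
by rewrite !mulrA.
Qed.

Lemma sum7_prod (F : 'I_7 -> 'I_7 -> R) :
  \prod_i \sum_j F i j = sum7 (fun k => \prod_i F i (k i)).
Proof.
rewrite prod7 -!mulrA /sum7 /= /tnth /= mulr_suml; apply: eq_bigr => a _.
do 6!(rewrite ?mulr_suml !mulr_sumr; apply: eq_bigr => ? _).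
by rewrite prod7 /= !mulrA.
Qed.

Lemma det_sum7 (M : 'M[R]_7) :
  \det M = sum7 (fun k => \prod_i M i (k i) * \det (fun_mx R k)).
Proof.
transitivity (sum7 (fun k =>
  \sum_(s : 'S_7) (-1) ^+ s * \prod_i (M i (k i) * (k i == s i)%:R))).
  rewrite -sum7_sum; apply: eq_bigr => s _.
  rewrite -mulr_sum7 -(sum7_prod (fun i j => M i j * (j == s i)%:R)).
  congr (_ * _); apply: eq_bigr => i _.
  rewrite (bigD1 (s i)) //= eqxx mulr1 big1 ?addr0 // => j /negbTE ->.
  by rewrite mulr0.
congr sum7; apply/funext => k; rewrite /determinant mulr_sumr; apply: eq_bigr => s _.
by rewrite big_split /= mulrCA; congr (_ * (_ * _)); apply: eq_bigr => i _; rewrite mxE.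
Qed.

End Sum7.

(** * Alternation of 7-linear forms *)

Section Alternation.
Variable R : comPzRingType.
Local Notation vec := 'rV[R]_7.

Lemma scalar_expand (f : vec -> R) : scalar f -> forall u, f u = \sum_i u 0 i * f 'e_i.
Proof.
move=> fL u; have f0 : f 0 = 0 by rewrite -(subrr 0) (zmod_morphism_linear fL) subrr.
rewrite {1}(row_sum_delta u); apply: (big_ind2 (fun p r => f p = r)) => //.
  by move=> p _ q _ <- <-; rewrite -{1}[p]scale1r fL mul1r.
by move=> i _; rewrite -[_ *: _]addr0 fL f0 addr0.
Qed.

Lemma scalar_comb3 n (f : 'rV[R]_n -> R) : scalar f ->
  forall a b c p q r, f (a *: p + b *: q + c *: r) = a * f p + b * f q + c * f r.
Proof. by move=> fL a b c p q r; rewrite -addrA !fL (scalable_linear fL) addrA. Qed.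

Definition alt7 (F : ('I_7 -> vec) -> R) (V : 'M[R]_7) : R :=
  \sum_(s : 'S_7) (-1) ^+ s * F (fun i => row (s i) V).

Lemma alt7_sum (I : finType) (c : I -> R) (F : I -> ('I_7 -> vec) -> R) V :
  alt7 (fun v => \sum_i c i * F i v) V = \sum_i c i * alt7 (F i) V.
Proof.
rewrite /alt7; under eq_bigr do rewrite mulr_sumr.
rewrite exchange_big; apply: eq_bigr => i _.
by rewrite mulr_sumr; apply: eq_bigr => s _; rewrite mulrCA.
Qed.

Lemma alt7D (F G : ('I_7 -> vec) -> R) (c : R) V :
  alt7 (fun v => F v + c * G v) V = alt7 F V + c * alt7 G V.
Proof.
rewrite /alt7 mulr_sumr -big_split; apply: eq_bigr => s _.
by rewrite mulrDr mulrCA.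
Qed.

Lemma alt7_mulmx (F : ('I_7 -> vec) -> R) (A V : 'M[R]_7) :
  alt7 (fun v => F (fun i => v i *m A)) V = alt7 F (V *m A).
Proof. by apply: eq_bigr => s _; congr (_ * F _); apply/funext => i; rewrite row_mul. Qed.

(* For alternating al, be, ga, [alt7 (form223 al be ga) V] is 2!2!3! times
   (al /\ be /\ ga)(V_1, ..., V_7); this turns the 6 of the metric formula into 144. *)
Definition form223 (al be : vec -> vec -> R) (ga : vec -> vec -> vec -> R)
    (v : 'I_7 -> vec) : R :=
  al (v (o7 0)) (v (o7 1)) * be (v (o7 2)) (v (o7 3)) * ga (v (o7 4)) (v (o7 5)) (v (o7 6)).

Definition bilinear_form (f : vec -> vec -> R) : Prop :=
  (forall q, scalar (f^~ q)) /\ (forall p, scalar (f p)).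

Definition trilinear_form (f : vec -> vec -> vec -> R) : Prop :=
  [/\ forall q r, scalar (fun p => f p q r), forall p r, scalar (fun q => f p q r)
     & forall p q, scalar (f p q)].

Lemma bilinear_expand f : bilinear_form f ->
  forall p q, f p q = \sum_a \sum_b p 0 a * q 0 b * f 'e_a 'e_b.
Proof.
move=> [f1 f2] p q; rewrite (scalar_expand (f1 q)); apply: eq_bigr => a _.
by rewrite (scalar_expand (f2 _)) mulr_sumr; apply: eq_bigr => b _; rewrite mulrA.
Qed.

Lemma trilinear_expand f : trilinear_form f -> forall p q r,
  f p q r = \sum_a \sum_b \sum_c p 0 a * q 0 b * r 0 c * f 'e_a 'e_b 'e_c.
Proof.
move=> [f1 f2 f3] p q r; rewrite (scalar_expand (f1 q r)); apply: eq_bigr => a _.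
rewrite (bilinear_expand (conj (f2 _) (f3 _))) mulr_sumr; apply: eq_bigr => b _.
by rewrite mulr_sumr; apply: eq_bigr => c _; rewrite !mulrA.
Qed.

Section Multilinear.
Variables (al be : vec -> vec -> R) (ga : vec -> vec -> vec -> R).
Hypotheses (alB : bilinear_form al) (beB : bilinear_form be) (gaT : trilinear_form ga).

Lemma form223_expand v : form223 al be ga v =
  sum7 (fun k => \prod_i v i 0 (k i) * form223 al be ga (fun i => 'e_(k i))).
Proof.
rewrite /form223 (bilinear_expand alB) (bilinear_expand beB) (trilinear_expand gaT).
rewrite sum7_mul223.
by congr sum7; apply/funext => k; rewrite prod7; ring.
Qed.

Lemma alt7_form223 V : alt7 (form223 al be ga) V =
  \det V * sum7 (fun k => form223 al be ga (fun i => 'e_(k i)) * \det (fun_mx R k)).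
Proof.
rewrite mulr_sum7 /alt7.
under eq_bigr do rewrite form223_expand mulr_sum7.
rewrite sum7_sum; congr sum7; apply/funext => k.
rewrite mulrCA -det_colsub -det_tr /determinant mulr_sumr; apply: eq_bigr => s _.
by rewrite mulrA mulrC; congr (_ * (_ * _)); apply: eq_bigr => i _; rewrite !mxE.
Qed.

Lemma alt7_form223_mulmx V A :
  alt7 (form223 al be ga) (V *m A) = \det A * alt7 (form223 al be ga) V.
Proof. by rewrite !alt7_form223 det_mulmx mulrCA mulrA. Qed.

End Multilinear.

Lemma alt7_form223_sum1 (I : finType) (c : I -> R) (al : I -> vec -> vec -> R) be ga V :
  alt7 (form223 (fun p q => \sum_i c i * al i p q) be ga) V
  = \sum_i c i * alt7 (form223 (al i) be ga) V.
Proof.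
rewrite -alt7_sum; congr alt7; apply/funext => v.
by rewrite /form223 !mulr_suml; apply: eq_bigr => i _; ring.
Qed.

Lemma alt7_form223_sum2 (I : finType) (c : I -> R) al (be : I -> vec -> vec -> R) ga V :
  alt7 (form223 al (fun p q => \sum_i c i * be i p q) ga) V
  = \sum_i c i * alt7 (form223 al (be i) ga) V.
Proof.
rewrite -alt7_sum; congr alt7; apply/funext => v.
by rewrite /form223 mulr_sumr mulr_suml; apply: eq_bigr => i _; ring.
Qed.

Lemma alt7_form223_sum3 (I : finType) (c : I -> R) al be
    (ga : I -> vec -> vec -> vec -> R) V :
  alt7 (form223 al be (fun p q r => \sum_i c i * ga i p q r)) V
  = \sum_i c i * alt7 (form223 al be (ga i)) V.
Proof.
rewrite -alt7_sum; congr alt7; apply/funext => v.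
by rewrite /form223 mulr_sumr; apply: eq_bigr => i _; ring.
Qed.

End Alternation.

(** * The standard forms phi0 and psi0 *)

Section G2Algebra.
Variable R : realType.
Local Notation vec := (vec R).

Definition dot (u v : vec) : R := \sum_j u 0 j * v 0 j.

Lemma dot_x (u v : vec) : dot u v = x u 1 * x v 1 + x u 2 * x v 2 + x u 3 * x v 3
  + x u 4 * x v 4 + x u 5 * x v 5 + x u 6 * x v 6 + x u 7 * x v 7.
Proof.
rewrite /dot !big_ord_recl big_ord0 addr0 !addrA.
congr (_ + _ + _ + _ + _ + _ + _); congr (u _ _ * v _ _).
all: by apply: val_inj; rewrite /= inordK.
Qed.

Lemma dot_scalar1 (y : vec) : scalar (dot^~ y).
Proof. by move=> c p q; rewrite !dot_x /x !mxE; ring. Qed.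

Lemma dotZZ (c : R) (u : vec) : dot (c *: u) (c *: u) = c ^+ 2 * dot u u.
Proof. by rewrite !dot_x /x !mxE; ring. Qed.

Definition dx4 (a b c d : nat) (w u v z : vec) : R :=
  x w a * dx3 b c d u v z - x w b * dx3 a c d u v z
  + x w c * dx3 a b d u v z - x w d * dx3 a b c u v z.

(* The coassociative 4-form psi0 = *phi0 (see [hodge3_adapted]). *)
Definition psi0 (w u v z : vec) : R :=
  dx4 4 5 6 7 w u v z - dx4 2 3 6 7 w u v z - dx4 2 3 4 5 w u v z
  - dx4 1 2 4 7 w u v z - dx4 1 2 5 6 w u v z + dx4 1 3 4 6 w u v z
  - dx4 1 3 5 7 w u v z.

Definition mk7 (a1 a2 a3 a4 a5 a6 a7 : R) : vec :=
  \row_(k < 7) nth 0 [:: a1; a2; a3; a4; a5; a6; a7] k.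

Lemma x_mk7 a1 a2 a3 a4 a5 a6 a7 k : (k < 7)%N ->
  x (mk7 a1 a2 a3 a4 a5 a6 a7) k.+1 = nth 0 [:: a1; a2; a3; a4; a5; a6; a7] k.
Proof. by move=> k7; rewrite /x mxE inordK. Qed.

(* The G2 cross product: phi0 y u w = <y x u, w>. *)
Definition cross (y u : vec) : vec := mk7
 (- x u 2*x y 3 + x u 3*x y 2 + x u 4*x y 5 - x u 5*x y 4 + x u 6*x y 7 - x u 7*x y 6)
 (x u 1*x y 3 - x u 3*x y 1 + x u 4*x y 6 - x u 5*x y 7 - x u 6*x y 4 + x u 7*x y 5)
 (- x u 1*x y 2 + x u 2*x y 1 + x u 4*x y 7 + x u 5*x y 6 - x u 6*x y 5 - x u 7*x y 4)
 (- x u 1*x y 5 - x u 2*x y 6 - x u 3*x y 7 + x u 5*x y 1 + x u 6*x y 2 + x u 7*x y 3)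
 (x u 1*x y 4 + x u 2*x y 7 - x u 3*x y 6 - x u 4*x y 1 + x u 6*x y 3 - x u 7*x y 2)
 (- x u 1*x y 7 + x u 2*x y 4 + x u 3*x y 5 - x u 4*x y 2 - x u 5*x y 3 + x u 7*x y 1)
 (x u 1*x y 6 - x u 2*x y 5 + x u 3*x y 4 - x u 4*x y 3 + x u 5*x y 2 - x u 6*x y 1).

Lemma x_lin (c : R) (p q : vec) k : x (c *: p + q) k = c * x p k + x q k.
Proof. by rewrite /x !mxE. Qed.

Section Dx3Linear.
Variables (a b c : nat) (k : R) (p q u v : vec).

Lemma dx3_lin1 : dx3 a b c (k *: p + q) u v = k * dx3 a b c p u v + dx3 a b c q u v.
Proof. by rewrite /dx3 !x_lin; ring. Qed.

Lemma dx3_lin2 : dx3 a b c u (k *: p + q) v = k * dx3 a b c u p v + dx3 a b c u q v.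
Proof. by rewrite /dx3 !x_lin; ring. Qed.

Lemma dx3_lin3 : dx3 a b c u v (k *: p + q) = k * dx3 a b c u v p + dx3 a b c u v q.
Proof. by rewrite /dx3 !x_lin; ring. Qed.

End Dx3Linear.

Lemma phi0_scalar1 (v w : vec) : scalar (fun u => phi0 u v w).
Proof. by move=> c p q; rewrite /phi0 !dx3_lin1; ring. Qed.

Lemma phi0_scalar2 (u w : vec) : scalar (fun v => phi0 u v w).
Proof. by move=> c p q; rewrite /phi0 !dx3_lin2; ring. Qed.

Lemma phi0_scalar3 (u v : vec) : scalar (phi0 u v).
Proof. by move=> c p q; rewrite /phi0 !dx3_lin3; ring. Qed.

Lemma psi0_scalar1 (u v w : vec) : scalar (fun p => psi0 p u v w).
Proof. by move=> c p q; rewrite /psi0 /dx4 !x_lin; ring. Qed.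

Lemma psi0_scalar2 (t v w : vec) : scalar (fun p => psi0 t p v w).
Proof. by move=> c p q; rewrite /psi0 /dx4 !dx3_lin1; ring. Qed.

Lemma psi0_scalar3 (t u w : vec) : scalar (fun p => psi0 t u p w).
Proof. by move=> c p q; rewrite /psi0 /dx4 !dx3_lin2; ring. Qed.

Lemma psi0_scalar4 (t u v : vec) : scalar (psi0 t u v).
Proof. by move=> c p q; rewrite /psi0 /dx4 !dx3_lin3; ring. Qed.

Lemma phi0_trilinear : trilinear_form (@phi0 R).
Proof. by split; [exact: phi0_scalar1 | exact: phi0_scalar2 | exact: phi0_scalar3]. Qed.

Lemma phi0_bilinear (u : vec) : bilinear_form (phi0 u).
Proof. by split; [exact: phi0_scalar2 | exact: phi0_scalar3]. Qed.

Lemma psi0_trilinear (t : vec) : trilinear_form (psi0 t).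
Proof. by split; [exact: psi0_scalar2 | exact: psi0_scalar3 | exact: psi0_scalar4]. Qed.

Lemma phi0_alt12 (u w : vec) : phi0 u u w = 0. Proof. by rewrite /phi0 /dx3; ring. Qed.
Lemma phi0_alt13 (u w : vec) : phi0 u w u = 0. Proof. by rewrite /phi0 /dx3; ring. Qed.
Lemma phi0_alt23 (u w : vec) : phi0 w u u = 0. Proof. by rewrite /phi0 /dx3; ring. Qed.
Lemma psi0_alt12 (u v w : vec) : psi0 u u v w = 0.
Proof. by rewrite /psi0 /dx4 /dx3; ring. Qed.

Lemma cross_linear (y : vec) : linear (cross y).
Proof.
move=> c p q; apply/rowP => k; rewrite !mxE.
by case: k => [[|[|[|[|[|[|[|k]]]]]]] hk] //=; rewrite /x !mxE; ring.
Qed.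

Lemma cross_self (y : vec) : cross y y = 0.
Proof.
apply/rowP => k; rewrite !mxE.
by case: k => [[|[|[|[|[|[|[|k]]]]]]] hk] //=; ring.
Qed.

Ltac g2_ring := rewrite /cross ?dot_x /phi0 /psi0 /dx4 /dx3 !x_mk7 //=; ring.

Section Cross.
Variables y u v w : vec.
Local Notation J := (cross y).

Lemma phi0_cross1 :
  phi0 (J u) v w = 3 * psi0 y u v w - phi0 u (J v) w - phi0 u v (J w).
Proof. g2_ring. Qed.

Definition yphi0 : R := dot u y * phi0 y v w + dot v y * phi0 u y w + dot w y * phi0 u v y.

Lemma phi0_cross2 : phi0 (J u) (J v) w = - 3 * dot y y * phi0 u v w + 4 * yphi0
  - phi0 (J u) v (J w) - phi0 u (J v) (J w).
Proof. rewrite /yphi0; g2_ring. Qed.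

Lemma phi0_cross3 : phi0 (J u) (J v) (J w) = - dot y y * psi0 y u v w.
Proof. g2_ring. Qed.

Lemma phi0_cross_y1 : phi0 y (J v) w = - phi0 y v (J w). Proof. g2_ring. Qed.
Lemma phi0_cross_y2 : phi0 (J u) y w = - phi0 u y (J w). Proof. g2_ring. Qed.
Lemma phi0_cross_y3 : phi0 (J u) v y = - phi0 u (J v) y. Proof. g2_ring. Qed.

Lemma phi0_cross2_y1 : phi0 y (J v) (J w) = dot y y * phi0 y v w. Proof. g2_ring. Qed.
Lemma phi0_cross2_y2 : phi0 (J u) y (J w) = dot y y * phi0 u y w. Proof. g2_ring. Qed.
Lemma phi0_cross2_y3 : phi0 (J u) (J v) y = dot y y * phi0 u v y. Proof. g2_ring. Qed.

End Cross.
End G2Algebra.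

(** * Integer certificates *)

(* The coefficients of phi0 and psi0 in the standard basis, recomputed over [int] so
   that the finitely many identities below are checked by [vm_compute]; [phi0z] and
   [psi0z] repeat the defining formulas and the tables only cache their values. *)

Definition forall7 (p : nat -> bool) : bool := all p (iota 0 7).

Lemma forall7P p : forall7 p -> forall i : 'I_7, p i.
Proof. by move=> /allP pP i; apply: pP; rewrite mem_iota ltn_ord. Qed.

Definition s7 (f : nat -> int) : int :=
  f 0%N + f 1%N + f 2%N + f 3%N + f 4%N + f 5%N + f 6%N.

Definition sum7z (C : nat -> nat -> nat -> nat -> nat -> nat -> nat -> int) : int :=
  s7 (fun a => s7 (fun b => s7 (fun c => s7 (fun d =>
  s7 (fun e => s7 (fun f => s7 (fun g => C a b c d e f g))))))).

Definition xz (p k : nat) : int := (p == k.-1)%:R.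

Definition dx3z (u v w : nat -> int) (a b c : nat) : int :=
  u a * (v b * w c - v c * w b) - u b * (v a * w c - v c * w a)
  + u c * (v a * w b - v b * w a).

Definition phi0z (p q r : nat) : int :=
  dx3z (xz p) (xz q) (xz r) 1 2 3 - dx3z (xz p) (xz q) (xz r) 1 6 7
  - dx3z (xz p) (xz q) (xz r) 5 2 7 - dx3z (xz p) (xz q) (xz r) 5 6 3
  + dx3z (xz p) (xz q) (xz r) 4 1 5 + dx3z (xz p) (xz q) (xz r) 4 2 6
  + dx3z (xz p) (xz q) (xz r) 4 3 7.

Definition dx4z (t u v w : nat -> int) (a b c d : nat) : int :=
  t a * dx3z u v w b c d - t b * dx3z u v w a c d
  + t c * dx3z u v w a b d - t d * dx3z u v w a b c.

Definition psi0z (p q r s : nat) : int :=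
  dx4z (xz p) (xz q) (xz r) (xz s) 4 5 6 7 - dx4z (xz p) (xz q) (xz r) (xz s) 2 3 6 7
  - dx4z (xz p) (xz q) (xz r) (xz s) 2 3 4 5 - dx4z (xz p) (xz q) (xz r) (xz s) 1 2 4 7
  - dx4z (xz p) (xz q) (xz r) (xz s) 1 2 5 6 + dx4z (xz p) (xz q) (xz r) (xz s) 1 3 4 6
  - dx4z (xz p) (xz q) (xz r) (xz s) 1 3 5 7.

Definition phi0_table : seq (seq (seq int)) := Eval vm_compute in
  [seq [seq [seq phi0z p q r | r <- iota 0 7] | q <- iota 0 7] | p <- iota 0 7].
Definition phi0_tab (p q r : nat) : int := nth 0 (nth [::] (nth [::] phi0_table p) q) r.

Definition psi0_table : seq (seq (seq (seq int))) := Eval vm_compute in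
  [seq [seq [seq [seq psi0z p q r s | s <- iota 0 7] | r <- iota 0 7] | q <- iota 0 7]
  | p <- iota 0 7].
Definition psi0_tab (p q r s : nat) : int :=
  nth 0 (nth [::] (nth [::] (nth [::] psi0_table p) q) r) s.

Lemma phi0_table_ok :
  forall7 (fun p => forall7 (fun q => forall7 (fun r => phi0_tab p q r == phi0z p q r))).
Proof. by vm_compute. Qed.

Lemma psi0_table_ok : forall7 (fun p => forall7 (fun q => forall7 (fun r =>
  forall7 (fun s => psi0_tab p q r s == psi0z p q r s)))).
Proof. by vm_compute. Qed.

(* A notation, not a definition: [vm_compute] evaluates arguments eagerly, and the
   test is what prunes the vanishing terms of the 7^7-term sums. *)
Local Notation mulz_lazy m n := (if m == 0 then 0 else m * n).

Lemma mulz_lazyE (m n : int) : mulz_lazy m n = m * n.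
Proof. by case: eqP => [->|]; rewrite ?mul0r. Qed.

Definition levi_civita7 (a b c d e f g : nat) : int :=
  levi_civita 7 [:: a; b; c; d; e; f; g].

Definition alt7z (A B : nat -> nat -> int) (G : nat -> nat -> nat -> int) : int :=
  s7 (fun a => s7 (fun b => mulz_lazy (A a b) (s7 (fun c => s7 (fun d =>
  mulz_lazy (B c d) (s7 (fun e => s7 (fun f => s7 (fun g =>
  mulz_lazy (G e f g) (levi_civita7 a b c d e f g)))))))))).

Definition phi0_contractz (a b c d : nat) : int :=
  s7 (fun e => s7 (fun f => s7 (fun g =>
  mulz_lazy (phi0_tab e f g) (levi_civita7 a b c d e f g)))).

Lemma alt7z_phi0_phi0_ok : forall7 (fun i => forall7 (fun j =>
  alt7z (phi0_tab i) (phi0_tab j) phi0_tab == 144 * (i == j)%:R)).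
Proof. by vm_compute. Qed.

Lemma alt7z_phi0_psi0_ok : forall7 (fun i => forall7 (fun j => forall7 (fun l =>
  alt7z (phi0_tab i) (phi0_tab j) (psi0_tab l) == 0))).
Proof. by vm_compute. Qed.

Lemma phi0_contractz_ok :
  forall7 (fun a => forall7 (fun b => forall7 (fun c => forall7 (fun d =>
  phi0_contractz a b c d == 6 * psi0_tab a b c d)))).
Proof. by vm_compute. Qed.

Lemma s7_mull (m : int) (f : nat -> int) : s7 (fun n => m * f n) = m * s7 f.
Proof. by rewrite /s7 !mulrDr. Qed.

Lemma alt7zE A B G : alt7z A B G = sum7z (fun a b c d e f g =>
  A a b * B c d * G e f g * levi_civita7 a b c d e f g).
Proof.
rewrite /alt7z /sum7z; congr s7; apply/funext => a; congr s7; apply/funext => b.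
rewrite mulz_lazyE -s7_mull; congr s7; apply/funext => c; rewrite -s7_mull.
congr s7; apply/funext => d; rewrite mulz_lazyE mulrA -s7_mull.
congr s7; apply/funext => e; rewrite -s7_mull; congr s7; apply/funext => f.
rewrite -s7_mull; congr s7; apply/funext => g; by rewrite mulz_lazyE !mulrA.
Qed.

Lemma phi0_contractzE a b c d : phi0_contractz a b c d =
  s7 (fun e => s7 (fun f => s7 (fun g => phi0_tab e f g * levi_civita7 a b c d e f g))).
Proof.
congr s7; apply/funext => e; congr s7; apply/funext => f.
by congr s7; apply/funext => g; rewrite mulz_lazyE.
Qed.

Section BasisValues.
Variable R : realType.
Local Notation vec := (vec R).

Lemma x_basis (i : 'I_7) k : (k.-1 < 7)%N -> x ('e_i : vec) k = (xz i k)%:~R.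
Proof.
move=> k7; rewrite /x /xz mxE eqxx /= -(inj_eq val_inj) /= inordK // eq_sym.
by case: eqP.
Qed.

Lemma phi0_basis (a b c : 'I_7) : phi0 ('e_a : vec) 'e_b 'e_c = (phi0_tab a b c)%:~R.
Proof.
have /forall7P/(_ a)/forall7P/(_ b)/forall7P/(_ c)/eqP -> := phi0_table_ok.
by rewrite /phi0 /dx3 !x_basis // /phi0z /dx3z; ring.
Qed.

Lemma psi0_basis (a b c d : 'I_7) :
  psi0 ('e_a : vec) 'e_b 'e_c 'e_d = (psi0_tab a b c d)%:~R.
Proof.
have /forall7P/(_ a)/forall7P/(_ b)/forall7P/(_ c)/forall7P/(_ d)/eqP -> := psi0_table_ok.
by rewrite /psi0 /dx4 /dx3 !x_basis // /psi0z /dx4z /dx3z; ring.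
Qed.

Lemma det_fun_mx_idx7 (a b c d e f g : 'I_7) :
  \det (fun_mx R (idx7 a b c d e f g)) = (levi_civita7 a b c d e f g)%:~R.
Proof. by rewrite det_fun_mx (map_comp val (tnth _)) map_tnth_enum. Qed.

Lemma sum_ord7_intr (F : 'I_7 -> R) (G : nat -> int) :
  (forall i : 'I_7, F i = (G i)%:~R) -> \sum_i F i = (s7 G)%:~R.
Proof. by move=> FG; rewrite sum7E /s7 !intrD !FG. Qed.

Lemma alt7_basis (al be : vec -> vec -> R) (ga : vec -> vec -> vec -> R)
    (A B : nat -> nat -> int) (G : nat -> nat -> nat -> int) :
  bilinear_form al -> bilinear_form be -> trilinear_form ga ->
  (forall a b : 'I_7, al 'e_a 'e_b = (A a b)%:~R) ->
  (forall c d : 'I_7, be 'e_c 'e_d = (B c d)%:~R) ->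
  (forall e f g : 'I_7, ga 'e_e 'e_f 'e_g = (G e f g)%:~R) ->
  alt7 (form223 al be ga) 1%:M = (alt7z A B G)%:~R.
Proof.
move=> alB beB gaT alE beE gaE.
rewrite alt7_form223 // det1 mul1r alt7zE /sum7z.
transitivity (sum7 (fun k => ((A (k (o7 0)) (k (o7 1)) * B (k (o7 2)) (k (o7 3))
  * G (k (o7 4)) (k (o7 5)) (k (o7 6)) * levi_civita7 (k (o7 0)) (k (o7 1)) (k (o7 2))
     (k (o7 3)) (k (o7 4)) (k (o7 5)) (k (o7 6)))%:~R : R))).
  apply: eq_sum7 => a b c d e f g.
  by rewrite /form223 alE beE gaE det_fun_mx_idx7 /= /tnth /= !intrM.
by rewrite /sum7 /= /tnth /=; do 7!(apply: sum_ord7_intr => ?).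
Qed.

Lemma alt7_phi0_basis (i j : 'I_7) :
  alt7 (form223 (phi0 'e_i) (phi0 'e_j) (@phi0 R)) 1%:M = 144 * (i == j)%:R.
Proof.
rewrite (alt7_basis (phi0_bilinear _) (phi0_bilinear _) (@phi0_trilinear R)
  (phi0_basis i) (phi0_basis j) phi0_basis).
have /forall7P/(_ i)/forall7P/(_ j)/eqP -> := alt7z_phi0_phi0_ok.
by rewrite intrM !rmorph_nat val_eqE.
Qed.

Lemma alt7_phi0_psi0_basis (i j l : 'I_7) :
  alt7 (form223 (phi0 'e_i) (phi0 'e_j) (psi0 ('e_l : vec))) 1%:M = 0.
Proof.
rewrite (alt7_basis (phi0_bilinear _) (phi0_bilinear _) (psi0_trilinear _)
  (phi0_basis i) (phi0_basis j) (psi0_basis l)).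
by have /forall7P/(_ i)/forall7P/(_ j)/forall7P/(_ l)/eqP -> := alt7z_phi0_psi0_ok.
Qed.

Lemma contract_phi0_basis (a b c d : 'I_7) :
  \sum_e \sum_f \sum_g phi0 'e_e 'e_f 'e_g * \det (fun_mx R (idx7 a b c d e f g))
  = 6 * psi0 'e_a 'e_b 'e_c 'e_d.
Proof.
have /forall7P/(_ a)/forall7P/(_ b)/forall7P/(_ c)/forall7P/(_ d)/eqP := phi0_contractz_ok.
rewrite phi0_contractzE psi0_basis => /(congr1 (fun m : int => m%:~R : R)).
rewrite intrM => <-.
do 3!(apply: sum_ord7_intr => ?).
by rewrite phi0_basis det_fun_mx_idx7 intrM.
Qed.

End BasisValues.

(** * The volume 7-form of phi0 *)

Section G2Volume.
Variable R : realType.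
Local Notation vec := (vec R).

Lemma dot_mulmx (A B : 'M[R]_7) (i j : 'I_7) :
  dot ('e_i *m A) ('e_j *m B) = (A *m B^T) i j.
Proof. by rewrite mxE; apply: eq_bigr => k _; rewrite -!rowE !mxE. Qed.

Lemma dot_basis (i j : 'I_7) : dot ('e_i : vec) 'e_j = (i == j)%:R.
Proof. by have := dot_mulmx 1%:M 1%:M i j; rewrite trmx1 !mulmx1 mxE. Qed.

Lemma dot_ge0 (u : vec) : 0 <= dot u u.
Proof. by apply: sumr_ge0 => i _; rewrite -expr2 sqr_ge0. Qed.

Lemma dot_eq0 (u : vec) : dot u u = 0 -> u = 0.
Proof.
move=> u0; apply/rowP => j; rewrite mxE; apply/eqP; rewrite -sqrf_eq0.
have /psumr_eq0P -> // : \sum_(i < 7) u 0 i ^+ 2 = 0.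
  by rewrite -[RHS]u0 /dot; apply: eq_bigr => i _; rewrite expr2.
by move=> i _; rewrite sqr_ge0.
Qed.

Lemma unit_decomposition (W : vec) : exists y n, [/\ dot y y = 1, 0 <= n & W = n *: y].
Proof.
have [W0|WW] := eqVneq (dot W W) 0.
  exists 'e_0, 0; rewrite dot_basis eqxx scale0r (dot_eq0 W0); split => //.
have WW_gt0 : 0 < dot W W by rewrite lt_neqAle eq_sym WW dot_ge0.
pose n := Num.sqrt (dot W W); have n_gt0 : 0 < n by rewrite sqrtr_gt0.
exists (n^-1 *: W), n; split; first by rewrite dotZZ exprVn sqr_sqrtr ?mulVf // ltW.
  exact: ltW.
by rewrite scalerA mulfV ?scale1r // gt_eqF.
Qed.

Lemma phi0_expand1 (u : vec) : phi0 u = fun p q => \sum_i u 0 i * phi0 'e_i p q.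
Proof.
by apply/funext => p; apply/funext => q; apply: scalar_expand (phi0_scalar1 _ _) u.
Qed.

Lemma alt7_phi0 (u v : vec) :
  alt7 (form223 (phi0 u) (phi0 v) (@phi0 R)) 1%:M = 144 * dot u v.
Proof.
rewrite (phi0_expand1 u) (phi0_expand1 v) alt7_form223_sum1 /dot mulr_sumr.
apply: eq_bigr => i _; rewrite alt7_form223_sum2 (bigD1 i) //= big1 ?addr0.
  by rewrite alt7_phi0_basis eqxx /=; ring.
by move=> j /negbTE ji; rewrite alt7_phi0_basis eq_sym ji !mulr0.
Qed.

Lemma alt7_phi0_psi0 (y : vec) :
  alt7 (form223 (phi0 y) (phi0 y) (psi0 y)) 1%:M = 0.
Proof.
have psi0E : psi0 y = fun p q r => \sum_l y 0 l * psi0 'e_l p q r.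
  apply/funext => p; apply/funext => q; apply/funext => r.
  exact: scalar_expand (psi0_scalar1 _ _ _) y.
rewrite psi0E (phi0_expand1 y) alt7_form223_sum1 big1 // => i _.
rewrite alt7_form223_sum2 big1 ?mulr0 // => j _.
by rewrite alt7_form223_sum3 big1 ?mulr0 // => l _; rewrite alt7_phi0_psi0_basis mulr0.
Qed.

Definition pullback_mx (A : 'M[R]_7) (phi : vec -> vec -> vec -> R) (u v w : vec) : R :=
  phi (u *m A) (v *m A) (w *m A).

Lemma alt7_pullback_phi0 (A : 'M[R]_7) (u v : vec) :
  let phiA := pullback_mx A (@phi0 R) in
  alt7 (form223 (phiA u) (phiA v) phiA) 1%:M = \det A * (144 * dot (u *m A) (v *m A)).
Proof.
rewrite /= (alt7_mulmx (form223 (phi0 (u *m A)) (phi0 (v *m A)) (@phi0 R))) -[A]mul1mx.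
rewrite (alt7_form223_mulmx (phi0_bilinear _) (phi0_bilinear _) (phi0_trilinear R)).
by rewrite mul1mx alt7_phi0.
Qed.

Lemma det_stab_phi0 (A : 'M[R]_7) : pullback_mx A (@phi0 R) = @phi0 R -> \det A = 1.
Proof.
move=> Aphi.
have key u v : 144 * dot u v = \det A * (144 * dot (u *m A) (v *m A)).
  by rewrite -alt7_pullback_phi0 Aphi alt7_phi0.
have AAt : \det A *: (A *m A^T) = 1%:M.
  apply/matrixP => i j; rewrite mxE [RHS]mxE -dot_mulmx.
  apply: (mulfI (_ : (144 : R) != 0)); first by rewrite pnatr_eq0.
  by rewrite mulrCA -key dot_basis.
have dA9 : \det A ^+ 9 = 1.
  by move/(congr1 determinant): AAt; rewrite detZ det_mulmx det_tr det1 => <-; ring.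
have dA_gt0 : 0 < \det A.
  have := key 'e_0 'e_0; rewrite dot_basis eqxx mulr1.
  have := dot_ge0 ('e_0 *m A); set t := dot _ _; set d := \det A; nra.
by apply/eqP; rewrite -(@eqrXn2 _ 9) // ?dA9 ?expr1n // ltW.
Qed.

Lemma contract_phi0_det (c1 c2 c3 c4 : vec) :
  \sum_j1 \sum_j2 \sum_j3 phi0 'e_j1 'e_j2 'e_j3 *
    \det (\matrix_(i, k) tup7 c1 c2 c3 c4 'e_j1 'e_j2 'e_j3 i 0 k)
  = 6 * psi0 c1 c2 c3 c4.
Proof.
transitivity (sum7 (fun k => c1 0 (k (o7 0)) * c2 0 (k (o7 1)) * c3 0 (k (o7 2))
   * c4 0 (k (o7 3))
   * (phi0 'e_(k (o7 4)) 'e_(k (o7 5)) 'e_(k (o7 6)) * \det (fun_mx R k)))).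
  under eq_bigr do under eq_bigr do under eq_bigr do rewrite det_sum7 mulr_sum7.
  under eq_bigr do under eq_bigr do rewrite sum7_sum.
  under eq_bigr do rewrite sum7_sum.
  rewrite sum7_sum; congr sum7; apply/funext => k.
  rewrite (trilinear_expand (phi0_trilinear R) 'e_(k (o7 4))).
  do 3!(rewrite ?mulr_suml ?mulr_sumr; apply: eq_bigr => ? _).
  rewrite prod7 !mxE /tup7 /= !(eq_sym (k _)); ring.
transitivity (\sum_a \sum_b \sum_c \sum_d
    c1 0 a * c2 0 b * c3 0 c * c4 0 d * (6 * psi0 'e_a 'e_b 'e_c 'e_d)).
  rewrite /sum7; do 4!(apply: eq_bigr => ? _); rewrite -contract_phi0_basis.
  by do 3!(rewrite mulr_sumr; apply: eq_bigr => ? _).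
rewrite (scalar_expand (psi0_scalar1 _ _ _) c1) mulr_sumr; apply: eq_bigr => a _.
rewrite (trilinear_expand (psi0_trilinear _)) !mulr_sumr; apply: eq_bigr => b _.
rewrite !mulr_sumr; apply: eq_bigr => c _; rewrite !mulr_sumr; apply: eq_bigr => d _.
ring.
Qed.

Lemma hodge3_adapted (phio : form3 R) (E : 'M[R]_7) : adapted phio E ->
  forall w u v z : vec,
    hodge3 E phio w u v z = psi0 (coords E w) (coords E u) (coords E v) (coords E z).
Proof.
move=> [Eu phioE] w u v z.
have cE j : coords E (row j E) = 'e_j by rewrite /coords -row_mul mulmxV // row1.
rewrite /hodge3 -[psi0 _ _ _ _](mulKf (_ : 6%:R != 0 :> R)) ?pnatr_eq0 //.
rewrite -contract_phi0_det; congr (_ * _); do 3!(apply: eq_bigr => ? _).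
rewrite phioE !cE; congr (_ * \det _); apply/matrixP => i k; rewrite mxE [RHS]mxE.
by case: i => [[|[|[|[|[|[|[|i]]]]]]] hi] //=; rewrite ?cE.
Qed.

End G2Volume.

(** * The twisting map and the main theorem *)

Section Twist.
Variable R : realType.
Local Notation vec := (vec R).
Variables (y : vec) (a be b : R).

Definition twist (u : vec) : vec := a *: u + (be * dot u y) *: y + b *: cross y u.

Lemma twist_linear : linear twist.
Proof.
move=> c p q; rewrite /twist (cross_linear y) (dot_scalar1 y).
by apply/rowP => k; rewrite !mxE; ring.
Qed.

HB.instance Definition _ := GRing.isLinear.Build R vec vec *:%R twist twist_linear.

Lemma mul_twist_mx (u : vec) : u *m lin1_mx twist = twist u.
Proof. exact: mul_rV_lin1. Qed.

Lemma twist_self : dot y y = 1 -> twist y = (a + be) *: y.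
Proof. by move=> y1; rewrite /twist cross_self y1 scaler0 addr0 mulr1 scalerDl. Qed.

Lemma phi0_twist (u v w : vec) :
  phi0 (twist u) (twist v) (twist w) =
    (a ^+ 3 - 3 * a * b ^+ 2 * dot y y) * phi0 u v w
  + (a ^+ 2 * be + 4 * a * b ^+ 2 + be * b ^+ 2 * dot y y) * yphi0 y u v w
  + (3 * a ^+ 2 * b - b ^+ 3 * dot y y) * psi0 y u v w.
Proof.
rewrite /twist !(scalar_comb3 (phi0_scalar1 _ _)) !(scalar_comb3 (phi0_scalar2 _ _)).
rewrite !(scalar_comb3 (phi0_scalar3 _ _)) !(phi0_alt12, phi0_alt13, phi0_alt23).
rewrite (phi0_cross3 y u v w) (phi0_cross2 y u v w) (phi0_cross1 y u v w).
rewrite (phi0_cross_y1 y v w) (phi0_cross_y2 y u w) (phi0_cross_y3 y u v).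
rewrite (phi0_cross2_y1 y v w) (phi0_cross2_y2 y u w) (phi0_cross2_y3 y u v) /yphi0.
ring.
Qed.

End Twist.

Section TwistDet.
Variable R : realType.
Local Notation vec := (vec R).
Variables (y : vec) (a b : R).
Hypotheses (y1 : dot y y = 1) (cube_re : a ^+ 3 - 3 * a * b ^+ 2 = 1).
Let s := a ^+ 2 + b ^+ 2.
Hypothesis s_neq0 : s != 0.
Local Notation P := (lin1_mx (twist y a (s^-1 - a) b)).
Let c := 3 * a ^+ 2 * b - b ^+ 3.

(* The coefficient of [yphi0] in [phi0_twist] is 1 - Re (a + ib)^3. *)
Lemma pullback_twist :
  pullback_mx P (@phi0 R) = fun u v w => phi0 u v w + c * psi0 y u v w.
Proof.
apply/funext => u; apply/funext => v; apply/funext => w.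
rewrite /pullback_mx !mul_twist_mx phi0_twist y1 !mulr1 cube_re mul1r.
have -> : a ^+ 2 * (s^-1 - a) + 4 * a * b ^+ 2 + (s^-1 - a) * b ^+ 2
    = 1 - (a ^+ 3 - 3 * a * b ^+ 2) by rewrite /s; field; exact: s_neq0.
by rewrite cube_re subrr mul0r addr0.
Qed.

Lemma det_twist : \det P = s ^+ 2.
Proof.
(* Evaluate (y _| phi) /\ (y _| phi) /\ phi for phi = P^* phi0 = phi0 + c y _| psi0;
   the psi0 term drops out and P y = y / s. *)
have := alt7_pullback_phi0 P y y; rewrite /= pullback_twist.
have -> : (fun v w => phi0 y v w + c * psi0 y y v w) = phi0 y.
  by apply/funext => v; apply/funext => w; rewrite psi0_alt12 mulr0 addr0.
have -> : form223 (phi0 y) (phi0 y) (fun u v w => phi0 u v w + c * psi0 y u v w)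
    = fun v => form223 (phi0 y) (phi0 y) (@phi0 R) v
               + c * form223 (phi0 y) (phi0 y) (psi0 y) v.
  by apply/funext => v; rewrite /form223; ring.
rewrite alt7D alt7_phi0 alt7_phi0_psi0 mulr0 addr0 mul_twist_mx twist_self // dotZZ y1.
rewrite !mulr1 (_ : a + (s^-1 - a) = s^-1); last by ring.
have k_neq0 : 144 * s^-1 ^+ 2 != 0 by rewrite mulf_neq0 ?expf_neq0 ?invr_eq0 // pnatr_eq0.
by move=> h; apply: (mulIf k_neq0); rewrite -h; field; exact: s_neq0.
Qed.

End TwistDet.

Lemma cube_root (R : rcfType) (n : R) :
  exists a b : R, a ^+ 3 - 3 * a * b ^+ 2 = 1 /\ 3 * a ^+ 2 * b - b ^+ 3 = n.
Proof.
have := @rootCK _ 3 isT (1 +i* n)%C; case: (3.-root _) => a b.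
rewrite !exprS expr0 mulr1 => -[Re Im]; exists a, b.
by split; [rewrite -[RHS]Re | rewrite -[RHS]Im]; ring.
Qed.

Section Frames.
Variable R : realType.
Local Notation vec := (vec R).

Lemma volfE (F : 'M[R]_7) (vs : 'I_7 -> vec) :
  volf F vs = \det (\matrix_(i, j) vs i 0 j) * \det (invmx F).
Proof.
rewrite /volf -det_mulmx; congr (\det _); apply/matrixP => i j; rewrite !mxE.
by apply: eq_bigr => k _; rewrite !mxE.
Qed.

Lemma adapted_volf (phi : form3 R) (F1 F2 : 'M[R]_7) (vs : 'I_7 -> vec) :
  adapted phi F1 -> adapted phi F2 -> volf F1 vs = volf F2 vs.
Proof.
move=> [F1u phiF1] [F2u phiF2].
have /det_stab_phi0 dA : pullback_mx (F2 *m invmx F1) (@phi0 R) = @phi0 R.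
  apply/funext => u; apply/funext => v; apply/funext => w.
  rewrite /pullback_mx !mulmxA -[phi0 _ _ _]/(phi0 (coords F1 _) _ _).
  by rewrite -phiF1 phiF2 /coords !mulmxK.
have dF : \det F2 = \det F1 by move: dA; rewrite det_mulmx det_inv => /divr1_eq.
by rewrite !volfE !det_inv dF.
Qed.

Lemma adapted_mulmx (phi : form3 R) (E P : 'M[R]_7) :
  E \in unitmx -> P \in unitmx ->
  (forall u v w, phi u v w = phi0 (coords E u *m P) (coords E v *m P) (coords E w *m P)) ->
  adapted phi (invmx (invmx E *m P)).
Proof.
move=> Eu Pu phiE; split; first by rewrite unitmx_inv unitmx_mul unitmx_inv Eu.
by move=> u v w; rewrite phiE /coords invmxK !mulmxA.
Qed.

Lemma volf_mulmx (E P : 'M[R]_7) (vs : 'I_7 -> vec) :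
  volf (invmx (invmx E *m P)) vs = \det P * volf E vs.
Proof. by rewrite !volfE invmxK det_mulmx [RHS]mulrC mulrA. Qed.

End Frames.

Lemma powR_cube_two_thirds (R : realType) (s : R) : 0 <= s ->
  (s ^+ 3) `^ (2%:R / 3%:R) = s ^+ 2.
Proof.
move=> s_ge0; rewrite -powR_mulrn // -powRrM (_ : 3%:R * (2%:R / 3%:R) = 2%:R :> R).
  by rewrite powR_mulrn.
by rewrite mulrCA mulfV ?mulr1 // pnatr_eq0.
Qed.

Theorem mainTheorem13 (R : realType) (phio : form3 R) (E : 'M[R]_7)
  (hE : adapted phio E) (w : vec R) :
  let phit := add3 phio (contr4 w (hodge3 E phio)) in
  is_G2 phit /\
  forall F : 'M[R]_7, adapted phit F ->
    forall vs : 'I_7 -> vec R,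
      volf F vs = (1 + metric E w w) `^ (2%:R / 3%:R) * volf E vs.
Proof.
move=> phit; have [Eu phioE] := hE.
have [y [n [y1 n_ge0 Wny]]] := unit_decomposition (coords E w).
have [a [b [cube_re cube_im]]] := cube_root n.
set s := a ^+ 2 + b ^+ 2.
have s3 : s ^+ 3 = 1 + n ^+ 2.
  transitivity ((a ^+ 3 - 3 * a * b ^+ 2) ^+ 2 + (3 * a ^+ 2 * b - b ^+ 3) ^+ 2).
    by rewrite /s; ring.
  by rewrite cube_re cube_im expr1n.
have s_ge0 : 0 <= s by rewrite addr_ge0 ?sqr_ge0.
have s_neq0 : s != 0.
  apply/eqP => s0; move: s3; rewrite s0 expr0n /= => /eqP.
  by rewrite eq_sym paddr_eq0 ?sqr_ge0 // oner_eq0.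
pose P := lin1_mx (twist y a (s^-1 - a) b).
have phitE u v z : phit u v z = phi0 (coords E u *m P) (coords E v *m P) (coords E z *m P).
  rewrite -[RHS]/(pullback_mx P (@phi0 R) _ _ _) pullback_twist //.
  rewrite /phit /add3 /contr4 phioE (hodge3_adapted hE) Wny.
  by rewrite (scalable_linear (psi0_scalar1 _ _ _)) cube_im.
have detP : \det P = s ^+ 2 by apply: det_twist.
have Pu : P \in unitmx by rewrite unitmxE detP unitfE expf_neq0.
have F0ad := adapted_mulmx Eu Pu phitE.
split; first by exists (invmx (invmx E *m P)).
move=> F Fad vs; rewrite (adapted_volf vs Fad F0ad) volf_mulmx detP.
rewrite -[metric E w w]/(dot (coords E w) (coords E w)) Wny dotZZ y1 mulr1 -s3.
by rewrite powR_cube_two_thirds.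
Qed.
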